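(* Let $l\in\mathbb N$, let $V_{l+1}=\{v_1,\dots,v_{l+1}\}$, and let $A$ be the adjacency matrix of a balanced tree $T\in\mathcal T_{V_{l+1}}$. Then the number of balanced trees $G\in\mathcal T_{V_{l+1}}$ with adjacency matrix $A(G)=A$ equals $$2l\prod_{i=1}^{l+1}(\operatorname{indeg}_T(v_i)-1)!.$$
   Context: For a finite ordered vertex set $V$ and $N\ge1$, a route through $V$ of length $N$ is a sequence $\mathbf i\in V^N$ whose set of entries equals $V$; its circuit multigraph $G_{\mathbf i}$ has vertex set $V$ and edges $1,\dots,N$ (own identity; parallel edges and loops allowed), edge $k<N$ from $i_k$ to $i_{k+1}$ and edge $N$ from $i_N$ to $i_1$; $\mathcal C_{V,N}$ is the set of all such graphs, and $G_{\mathbf i}$ is identified with its route $\mathbf i$ (so distinct routes give distinct graphs). A directed multigraph is balanced if its edges split into pairs $(e,e')$ with the head of $e$ equal to the tail of $e'$ and vice versa. $\mathcal T_{V_{l+1}}$ is the set of balanced $G\in\mathcal C_{V_{l+1},2l}$ (balanced trees). The adjacency matrix $A(G)$ has entry $A(G)_{v,w}$ equal to the number of edges from $v$ to $w$; $\operatorname{indeg}_T(v)$ is the number of edges with head $v$. *)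

From mathcomp Require Import all_boot all_order all_algebra all_fingroup.
Set Implicit Arguments. Unset Strict Implicit. Unset Printing Implicit Defensive.

(* Vertex set V = 'I_n (v_1,...,v_n are the ordinals 0..n-1, in order).
   A sequence i in V^N is a finite function 'I_N -> 'I_n; edge k (an element
   of 'I_N) goes from i_k to i_{k+1}, the last edge going back to i_1.
   The circuit multigraph G_i is identified with its route i. *)

Section Circuits.
Variables (n N : nat).
Implicit Type r : {ffun 'I_N -> 'I_n}.

Definition etail r (k : 'I_N) : 'I_n := r k.
Definition ehead r (k : 'I_N) : 'I_n := r (ordS k).

Definition is_route r : bool := (0 < N) && [forall v : 'I_n, v \in codom r].

(* balanced: the edges split into pairs (e, e'), e <> e', with
   head e = tail e' and tail e = head e'; encoded by a fixed-point-free
   involution of the edge set *)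
Definition is_balanced r : bool :=
  [exists p : {perm 'I_N}, [forall e : 'I_N,
     [&& p (p e) == e, p e != e,
         ehead r e == etail r (p e) & etail r e == ehead r (p e)]]].

Definition adjm r : 'M[nat]_n :=
  \matrix_(v, w) #|[set k : 'I_N | (etail r k == v) && (ehead r k == w)]|.

Definition indeg r (v : 'I_n) : nat := #|[set k : 'I_N | ehead r k == v]|.

End Circuits.

Definition balanced_trees (l : nat) : {set {ffun 'I_(2 * l) -> 'I_l.+1}} :=
  [set r | is_route r && is_balanced r].

From mathcomp Require Import all_boot all_order all_algebra all_fingroup.
Set Implicit Arguments. Unset Strict Implicit. Unset Printing Implicit Defensive.

(* Let s be a closed walk of length N whose multiset E of steps is symmetric and
   which visits more than N/2 distinct vertices (for N = 2l, a walk around a tree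
   on l + 1 vertices).  Rotation permutes the walks with multiset of steps E (the
   tours of E), so the tours beginning with a step e are a fraction count(e, E)/N
   of all of them.  By pigeonhole some vertex x is visited once, necessarily as
   y x y; the tours beginning with the step (y, x) correspond to the tours of s
   without this detour that begin at y, of which there are d_y * prod_v (d_v - 1)!
   by induction, d_v being the number of visits to v.  Hence there are
   N * prod_v (d_v - 1)! tours.  The circuit graphs G with A(G) = A(T) are exactly
   the routes whose cyclic list of steps is a rearrangement of that of T, because
   being a balanced route only depends on this multiset. *)

Lemma rot_zip (S T : Type) (s : seq S) (t : seq T) k :
  size s = size t -> rot k (zip s t) = zip (rot k s) (rot k t).
Proof.
have rot1_zip (u : seq S) (w : seq T) : size u = size w ->
    rot 1 (zip u w) = zip (rot 1 u) (rot 1 w).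
  by case: u w => [|a u] [|b w] // [eq_uw]; rewrite !rot1_cons zip_rcons.
move=> eq_st; elim: k => [|k IHk]; first by rewrite !rot0.
have [lt_ks | le_sk] := ltnP k (size s); last first.
  by rewrite !rot_oversize ?size_zip -?eq_st ?minnn // ltnW.
rewrite (rotS lt_ks) (@rotS _ k t) -?eq_st // (@rotS _ k (zip s t)).
  by rewrite IHk rot1_zip // !size_rot.
by rewrite size_zip -eq_st minnn.
Qed.

Lemma count_mem_ohead_rot (T : eqType) (u : seq T) x :
  count_mem x u = \sum_(k < size u) (ohead (rot k u) == Some x).
Proof.
rewrite -sum1_count (big_nth x) big_mkord big_mkcond /=; apply: eq_bigr => k _.
by rewrite /rot (drop_nth x) //=; case: (_ == x).
Qed.

Lemma sum_count_mem_pair (U : eqType) (W : finType) (E : seq (U * W)) y :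
  \sum_(w : W) count_mem (y, w) E = count_mem y (unzip1 E).
Proof.
elim: E => [|[a b] E IHE] /=; first by rewrite big1.
rewrite big_split /= IHE; congr (_ + _).
have [<-|neq_ay] := eqVneq a y; last first.
  by rewrite big1 // => w _; rewrite xpair_eqE (negbTE neq_ay).
rewrite (bigD1 b) //= xpair_eqE !eqxx big1 // => w /negbTE.
by rewrite xpair_eqE eqxx eq_sym => ->.
Qed.

Lemma sum_count_mem (V : finType) (s : seq V) : \sum_(v : V) count_mem v s = size s.
Proof.
elim: s => [|a s IHs] /=; first by rewrite big1.
rewrite big_split /= IHs (bigD1 a) //= eqxx big1 // => v /negbTE.
by rewrite eq_sym => ->.
Qed.

Lemma exists_count_mem1 (V : finType) (s : seq V) :
  size s < #|[set v in s]|.*2 -> exists x, count_mem x s = 1.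
Proof.
move=> lt_s_2V; have [x /eqP | count_ne1] := pickP (fun x => count_mem x s == 1).
  by exists x.
suff : #|[set v in s]|.*2 <= size s by rewrite leqNgt lt_s_2V.
rewrite -sum_count_mem (bigID (mem s)) /= -[X in X <= _]addn0 leq_add //.
rewrite -muln2 -sum_nat_const (eq_bigl (mem s)) => [|v]; last by rewrite inE.
apply: leq_sum => v v_in_s; have := count_ne1 v.
have : 0 < count_mem v s by rewrite -has_count has_pred1.
by case: (count_mem v s) => [|[|]].
Qed.

Lemma card_set_count (T : finType) (P : pred T) : #|[set k | P k]| = count P (enum T).
Proof. by rewrite -sum1dep_card -sum1_count big_enum_cond. Qed.

Section CyclicEdges.
Variable V : eqType.
Implicit Types (x y : V) (r s : seq V).

Definition edges s : seq (V * V) := zip s (rot 1 s).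

Definition symmetric_edges s :=
  forall v w, count_mem (v, w) (edges s) = count_mem (w, v) (edges s).

Lemma size_edges s : size (edges s) = size s.
Proof. by rewrite size_zip size_rot minnn. Qed.

Lemma unzip1_edges s : unzip1 (edges s) = s.
Proof. by rewrite unzip1_zip ?size_rot. Qed.

Lemma unzip2_edges s : unzip2 (edges s) = rot 1 s.
Proof. by rewrite unzip2_zip ?size_rot. Qed.

Lemma mem_edges v w s : (v, w) \in edges s -> (v \in s) && (w \in s).
Proof.
move=> vw_s; apply/andP; split.
  by rewrite -(unzip1_edges s); exact: (map_f fst vw_s).
by rewrite -(mem_rot 1) -unzip2_edges; exact: (map_f snd vw_s).
Qed.

Lemma edges_rot k s : edges (rot k s) = rot k (edges s).
Proof. by rewrite /edges rot_rot rot_zip ?size_rot. Qed.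

Lemma perm_edges_rot k s : perm_eq (edges (rot k s)) (edges s).
Proof. by rewrite edges_rot perm_rot. Qed.

Lemma perm_edges_rotr k s : perm_eq (edges (rotr k s)) (edges s).
Proof. by rewrite perm_sym -{1}(rotrK k s) perm_edges_rot. Qed.

Lemma edges_cons2 x y s :
  edges [:: y, x, y & s] = [:: (y, x), (x, y) & edges (y :: s)].
Proof. by rewrite /edges !rot1_cons. Qed.

Lemma perm_edges s1 s2 :
  perm_eq (edges s1) (edges s2) -> perm_eq s1 s2.
Proof. by rewrite -{2}(unzip1_edges s1) -{2}(unzip1_edges s2); apply: perm_map. Qed.

Lemma symmetric_edges_perm s1 s2 :
  perm_eq (edges s1) (edges s2) -> symmetric_edges s2 -> symmetric_edges s1.
Proof. by move=> /seq.permP eq_e sym_s2 v w; rewrite !eq_e. Qed.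

Lemma rot_to_leaf s x : count_mem x s = 1 -> 1 < size s ->
  exists y r, [/\ x \notin y :: r, perm_eq [:: y, x & r] s
                & perm_eq (edges [:: y, x & r]) (edges s)].
Proof.
move=> x_once size_s; have x_in_s : x \in s by rewrite -has_pred1 has_count x_once.
case: (rot_to x_in_s) => i s'; case/lastP: s' => [|r y] rot_s.
  by move: size_s; rewrite -(size_rot i) rot_s.
have def_s1 : rotr 1 (rot i s) = [:: y, x & r] by rewrite rot_s -rcons_cons rotr1_rcons.
exists y, r; rewrite -def_s1 perm_rotr perm_rot; split=> //.
  have /seq.permP/(_ (pred1 x)) : perm_eq (rot i s) s by rewrite perm_rot.
  by rewrite rot_s x_once /= eqxx add1n => -[/count_memPn]; rewrite mem_rcons.
exact: perm_trans (perm_edges_rotr _ _) (perm_edges_rot _ _).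
Qed.

Lemma pendant_neighbor x y (c : V) r :
  symmetric_edges [:: y, x, c & r] -> x \notin [:: y, c & r] -> c = y.
Proof.
move=> sym_s; rewrite in_cons negb_or => /andP [neq_xy x_notin_cr].
have : (x, y) \in edges [:: y, x, c & r].
  by rewrite -has_pred1 has_count sym_s /= eqxx.
rewrite /edges !rot1_cons /= !in_cons !xpair_eqE (negbTE neq_xy) eqxx /=.
case/orP => [/eqP -> // | /(map_f fst)].
rewrite -[map _ _]/(unzip1 _) unzip1_zip ?size_rcons // => x_in_cr.
by rewrite x_in_cr in x_notin_cr.
Qed.

Lemma symmetric_edges_pendant x y r :
  symmetric_edges [:: y, x, y & r] -> symmetric_edges (y :: r).
Proof.
move=> sym_s v w; have := sym_s v w; rewrite edges_cons2 /= !xpair_eqE.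
by rewrite [(y == w) && _]andbC [(x == w) && _]andbC [LHS]addnCA => /addnI /addnI.
Qed.

End CyclicEdges.

Section Tours.
Variable V : finType.
Implicit Types (x y : V) (r s : seq V) (E : seq (V * V)).

Definition tours N E : {set N.-tuple V} := [set t : N.-tuple V | perm_eq (edges t) E].

Definition starts e s := ohead (edges s) == Some e.

(* Unvisited vertices contribute [(0.-1)`! = 1]. *)
Definition indeg_fact s := \prod_(v : V) (count_mem v s).-1`!.

Lemma tours_perm N E E' : perm_eq E E' -> tours N E = tours N E'.
Proof. by move=> eq_E; apply/setP => t; rewrite !inE (permPr eq_E). Qed.

(* Double counting of the pairs (t, k) such that the k-th step of t is e. *)
Lemma card_tours_starts N E e :
  N * #|[set t in tours N E | starts e t]| = #|tours N E| * count_mem e E.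
Proof.
have card_starts_rot k : #|[set t in tours N E | starts e (rot k t)]| =
                         #|[set t in tours N E | starts e t]|.
  have rot_inj_tuple : injective (@rot_tuple N k V).
    by move=> t1 t2 /(congr1 val) /rot_inj /val_inj.
  rewrite -[RHS](card_preimset _ rot_inj_tuple); apply: eq_card => t.
  by rewrite !inE /= edges_rot perm_rot.
have -> : N * #|[set t in tours N E | starts e t]| =
          \sum_(k < N) #|[set t in tours N E | starts e (rot k t)]|.
  by under eq_bigr => k _ do rewrite card_starts_rot; rewrite sum_nat_const card_ord.
rewrite -sum_nat_const.
transitivity (\sum_(t in tours N E) \sum_(k < N) (starts e (rot k t) : nat)).
  rewrite exchange_big /=; apply: eq_bigr => k _.
  by rewrite -sum1dep_card big_mkcondr /=; apply: eq_bigr => t _; case: starts.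
apply: eq_bigr => t; rewrite inE => /seq.permP <-.
rewrite count_mem_ohead_rot size_edges size_tuple.
by apply: eq_bigr => k _; rewrite /starts edges_rot.
Qed.

Lemma sum_starts s y : 0 < size s ->
  \sum_(w : V) (starts (y, w) s : nat) = (ohead s == Some y).
Proof.
case: s => [|a s] // _; rewrite /starts /edges rot1_cons.
have [b [u ->]] : exists b u, rcons s a = b :: u.
  by case: s => [|b u]; do 2!eexists.
rewrite (bigD1 b) //= big1 => [|w /negbTE neq_wb]; rewrite !(inj_eq Some_inj) xpair_eqE.
  by rewrite eqxx andbT addn0.
by rewrite [b == _]eq_sym neq_wb andbF.
Qed.

Lemma card_tours_head N E c y : 0 < N -> #|tours N E| = N * c ->
  #|[set t in tours N E | ohead t == Some y]| = c * count_mem y (unzip1 E).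
Proof.
move=> N_gt0 card_E.
have card_starts w : #|[set t in tours N E | starts (y, w) t]| = c * count_mem (y, w) E.
  by apply/eqP; rewrite -(eqn_pmul2l N_gt0) card_tours_starts card_E mulnA.
rewrite -sum_count_mem_pair big_distrr /=.
under [RHS]eq_bigr => w _ do rewrite -card_starts -sum1dep_card big_mkcondr /=.
rewrite exchange_big -sum1dep_card big_mkcondr /=; apply: eq_bigr => t _.
by rewrite -[LHS]/(nat_of_bool _) -sum_starts ?size_tuple.
Qed.

Lemma card_tours_pendant_starts N E x y : 0 < N -> x != y -> x \notin unzip1 E ->
  #|[set t in tours N.+2 [:: (y, x), (x, y) & E] | starts (y, x) t]| =
  #|[set t in tours N E | ohead t == Some y]|.
Proof.
case: N => // N _ neq_xy x_notin_E.
pose grow (t : N.+1.-tuple V) := cons_tuple y (cons_tuple x t).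
have grow_inj : injective grow by move=> t1 t2 [] /val_inj.
rewrite -(card_imset _ grow_inj); apply: eq_card => u; rewrite !inE.
apply/andP/imsetP => [[] | [t]]; last first.
  rewrite inE; case/tupleP: t => c t /andP [tour_t /eqP [eq_cy]] ->; subst c.
  rewrite /grow /starts /= edges_cons2 !perm_cons eqxx.
  by split => //; rewrite inE in tour_t.
case/tupleP: u => a u; case/tupleP: u => b u; case/tupleP: u => c u.
rewrite /starts /edges /= (inj_eq Some_inj) xpair_eqE.
move=> tour_u /andP [/eqP eq_ay /eqP eq_bx]; subst a b.
have : (x, c) \in [:: (y, x), (x, y) & E] by rewrite -(perm_mem tour_u) !inE eqxx orbT.
rewrite !inE !xpair_eqE (negbTE neq_xy) eqxx /= => /orP [/eqP eq_cy | xc_E]; last first.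
  by case/negP: x_notin_E; apply: (map_f fst xc_E).
subst c; exists (cons_tuple y u); last exact: val_inj.
rewrite !inE /= eqxx andbT /edges rot1_cons -cats1.
by rewrite !perm_cons in tour_u.
Qed.

Lemma indeg_fact_perm s1 s2 : perm_eq s1 s2 -> indeg_fact s1 = indeg_fact s2.
Proof. by move=> /seq.permP eq_s; apply: eq_bigr => v _; rewrite eq_s. Qed.

Lemma indeg_fact_uniq s : uniq s -> indeg_fact s = 1.
Proof. by move=> uniq_s; apply: big1 => v _; rewrite count_uniq_mem //; case: (v \in s). Qed.

Lemma indeg_fact_pendant x y s : x \notin s -> y \in s ->
  indeg_fact [:: y, x & s] = indeg_fact s * count_mem y s.
Proof.
move=> x_notin_s y_in_s.
have c_gt0 : 0 < count_mem y s by rewrite -has_count has_pred1.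
have neq_xy : x != y by apply: contraNneq x_notin_s => ->.
transitivity (\prod_(v : V) ((count_mem v s).-1`! * (if v == y then count_mem y s else 1))).
  apply: eq_bigr => v _; rewrite -[count_mem v _]/((y == v) + ((x == v) + count_mem v s)).
  have [-> | neq_vy] := eqVneq v y.
    by rewrite (negbTE neq_xy) -(prednK c_gt0) factS mulnC.
  rewrite muln1; have [<- | _] //= := eqVneq x v.
  by rewrite (count_memPn x_notin_s).
by rewrite big_split -big_mkcond big_pred1_eq.
Qed.

Lemma card_tours_loop x : #|tours 1 (edges [:: x])| = 1 * indeg_fact [:: x].
Proof.
have := card_tours_starts 1 (edges [:: x]) (x, x).
have -> : [set t in tours 1 (edges [:: x]) | starts (x, x) t] = [set [tuple x]].
  apply/setP => t; rewrite !inE; case/tupleP: t => a t; rewrite tuple0.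
  rewrite /starts /= (inj_eq Some_inj) xpair_eqE andbb.
  apply/andP/eqP => [[_ /eqP ->] | /(congr1 val) [->]]; first exact: val_inj.
  by rewrite eqxx perm_refl.
by rewrite cards1 /= eqxx indeg_fact_uniq // -[true + 0]/1 !muln1 => <-.
Qed.

Lemma card_tours_edge x y : x != y -> #|tours 2 (edges [:: y; x])| = 2 * indeg_fact [:: y; x].
Proof.
move=> neq_xy; have := card_tours_starts 2 (edges [:: y; x]) (y, x).
have -> : [set t in tours 2 (edges [:: y; x]) | starts (y, x) t] = [set [tuple y; x]].
  apply/setP => t; rewrite !inE; case/tupleP: t => a t; case/tupleP: t => b t; rewrite tuple0.
  rewrite /starts /= (inj_eq Some_inj) xpair_eqE.
  apply/andP/eqP => [[_ /andP [/eqP -> /eqP ->]] | /(congr1 val) [-> ->]]; first exact: val_inj.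
  by rewrite !eqxx perm_refl.
have uniq_yx : uniq [:: y; x] by rewrite /= inE eq_sym neq_xy.
rewrite cards1 /= eqxx xpair_eqE (negbTE neq_xy) indeg_fact_uniq //.
by rewrite -[_ + _]/1 !muln1 => <-.
Qed.

Lemma card_tours_pendant x y r : x \notin y :: r ->
  #|tours (size r).+1 (edges (y :: r))| = (size r).+1 * indeg_fact (y :: r) ->
  #|tours (size r).+3 (edges [:: y, x, y & r])| = (size r).+3 * indeg_fact [:: y, x, y & r].
Proof.
move=> x_notin_t card_t.
have neq_xy : x != y by apply: contraNneq x_notin_t => ->; rewrite mem_head.
have yx_notin_t : (y, x) \notin edges (y :: r).
  by apply: contra x_notin_t => /mem_edges /andP [].
have := card_tours_starts (size r).+3 (edges [:: y, x, y & r]) (y, x).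
rewrite edges_cons2 /= eqxx xpair_eqE (negbTE neq_xy) (count_memPn yx_notin_t) muln1 => <-.
rewrite card_tours_pendant_starts ?unzip1_edges // (card_tours_head _ _ card_t) //.
by rewrite unzip1_edges indeg_fact_pendant ?mem_head // mulnA.
Qed.

Lemma card_set_pendant x y r : x \notin y :: r ->
  #|[set v in [:: y, x, y & r]]| = #|[set v in y :: r]|.+1.
Proof.
move=> x_notin; have -> : [set v in [:: y, x, y & r]] = x |: [set v in y :: r].
  by apply/setP => v; rewrite !inE; case: (v == y); rewrite ?orbT.
by rewrite cardsU1 inE x_notin.
Qed.

Theorem card_tours_tree N s :
  size s = N -> 0 < N -> N < #|[set v in s]|.*2 -> symmetric_edges s ->
  #|tours N (edges s)| = N * indeg_fact s.
Proof.
elim/ltn_ind: N s => N IH s size_s; subst N => size_gt0 few_vertices sym_s.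
have [x x_once] := exists_count_mem1 few_vertices.
have [le_s1 | lt_1s] := leqP (size s) 1.
  case: s {IH x_once few_vertices sym_s} le_s1 size_gt0 => [|a []] // _ _.
  exact: card_tours_loop.
have [y [r [x_notin perm_s perm_e]]] := rot_to_leaf x_once lt_1s.
have {}sym_s := symmetric_edges_perm perm_e sym_s.
have {}few_vertices : size [:: y, x & r] < #|[set v in [:: y, x & r]]|.*2.
  rewrite (perm_size perm_s) (eq_card (_ : _ =i [set v in s])) // => v.
  by rewrite !in_set (perm_mem perm_s).
rewrite -(tours_perm _ perm_e) -(indeg_fact_perm perm_s) -(perm_size perm_s) in IH *.
case: r {s x_once lt_1s perm_s perm_e size_gt0} => [|c r] in x_notin sym_s IH few_vertices *.
  by apply: card_tours_edge; rewrite mem_seq1 in x_notin.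
have eq_cy := pendant_neighbor sym_s x_notin; subst c.
have {}x_notin : x \notin y :: r by move: x_notin; rewrite !inE orbA orbb.
rewrite card_set_pendant //= doubleS !ltnS in few_vertices.
exact: card_tours_pendant x_notin (IH _ _ _ erefl _ _ (symmetric_edges_pendant sym_s)).
Qed.

End Tours.

Lemma card_ffun_tours (aT V : finType) (E : seq (V * V)) :
  #|[set f : {ffun aT -> V} | perm_eq (edges (codom f)) E]| = #|tours #|aT| E|.
Proof.
rewrite -(card_imset _ (can_inj (@fgraphK _ _))); apply: eq_card => t; rewrite inE.
apply/imsetP/idP => [[f] | tour_t]; first by rewrite inE => tour_f ->.
by exists (Finfun t); rewrite ?FinfunK // inE codom_ffun FinfunK.
Qed.

Lemma rot1_enum_ord N : rot 1 (enum 'I_N) = map (@ordS N) (enum 'I_N).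
Proof.
case: N => [|N]; first by rewrite enum_ord0.
rewrite [in LHS]enum_ordSl [in RHS]enum_ordSr rot1_cons map_rcons -map_comp.
congr rcons; last by apply: val_inj; rewrite /= modnn.
by apply: eq_map => i; apply: val_inj; rewrite /= modn_small ?ltnS // bump0.
Qed.

Section CircuitGraphs.
Variables n N : nat.
Implicit Types G T : {ffun 'I_N -> 'I_n}.

Lemma edges_codom G : edges (codom G) = [seq (etail G k, ehead G k) | k <- enum 'I_N].
Proof. by rewrite /edges codomE -map_rot rot1_enum_ord -(map_comp G (@ordS N)) zip_map. Qed.

Lemma adjmE G v w : adjm G v w = count_mem (v, w) (edges (codom G)).
Proof.
rewrite mxE card_set_count edges_codom [RHS]count_map.
by apply: eq_count => k; rewrite /= xpair_eqE.
Qed.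

Lemma indegE G v : indeg G v = count_mem v (codom G).
Proof.
have /seq.permP <- : perm_eq (rot 1 (codom G)) (codom G) by rewrite perm_rot.
rewrite /indeg card_set_count -unzip2_edges edges_codom [RHS]count_map [RHS]count_map.
by apply: eq_count.
Qed.

Lemma eq_adjm_perm_edges G T :
  (adjm G == adjm T) = perm_eq (edges (codom G)) (edges (codom T)).
Proof.
apply/eqP/idP => [eq_A | /seq.permP eq_count_e]; last first.
  by apply/matrixP => v w; rewrite !adjmE eq_count_e.
by apply/allP => -[v w] _ /=; rewrite -!adjmE eq_A.
Qed.

Lemma route_perm_edges G T :
  perm_eq (edges (codom G)) (edges (codom T)) -> is_route G = is_route T.
Proof.
move=> /perm_edges/perm_mem eq_mem; congr (_ && _).
by apply: eq_forallb => v; rewrite eq_mem.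
Qed.

Lemma balanced_perm_edges G T :
  perm_eq (edges (codom G)) (edges (codom T)) -> is_balanced T -> is_balanced G.
Proof.
move=> perm_e /existsP [q /forallP pairing].
have /tuple_permP [p eq_e] : perm_eq (edges (codom G)) [tuple (etail T k, ehead T k) | k < N].
  by rewrite /= -edges_codom.
have edge_p k : (etail G k, ehead G k) = (etail T (p k), ehead T (p k)).
  move: eq_e; rewrite edges_codom /= => /eq_in_map/(_ k (mem_enum _ k)).
  by rewrite tnth_mktuple.
(* the pairing of the edges of T, transported along p *)
pose q' := (p * q * p^-1)%g; have p_q' k : p (q' k) = q (p k) by rewrite !permM permKV.
apply/existsP; exists q'; apply/forallP => k.
case/and4P: (pairing (p k)) => /eqP qq_pk q_pk /eqP head_pk /eqP tail_pk.
case: (edge_p k) (edge_p (q' k)) => -> -> [-> ->]; rewrite p_q' head_pk tail_pk !eqxx !andbT.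
apply/andP; split; last by rewrite -(inj_eq (@perm_inj _ p)) p_q'.
by apply/eqP/(@perm_inj _ p); rewrite !p_q' qq_pk.
Qed.

Lemma balanced_symmetric_edges T : is_balanced T -> symmetric_edges (codom T).
Proof.
move=> /existsP [p /forallP pairing].
have le_adjm v w : adjm T v w <= adjm T w v.
  rewrite !mxE -(card_imset _ (@perm_inj _ p)).
  apply/subset_leq_card/subsetP => pk /imsetP [k]; rewrite inE => /andP [/eqP <- /eqP <-] ->.
  by case/and4P: (pairing k) => _ _ /eqP -> /eqP ->; rewrite inE !eqxx.
by move=> v w; rewrite -!adjmE; apply/eqP; rewrite eqn_leq !le_adjm.
Qed.

End CircuitGraphs.

Theorem lemma3p10 (l : nat) (T : {ffun 'I_(2 * l) -> 'I_l.+1}) :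
  T \in balanced_trees l ->
  #|[set G in balanced_trees l | adjm G == adjm T]| =
    (2 * l * \prod_(v : 'I_l.+1) ((indeg T v).-1)`!)%N.
Proof.
rewrite inE => /andP [route_T bal_T].
have [l_gt0 /forallP T_onto] := andP route_T.
have -> : [set G in balanced_trees l | adjm G == adjm T] =
          [set G : {ffun _ -> _} | perm_eq (edges (codom G)) (edges (codom T))].
  apply/setP => G; rewrite !inE eq_adjm_perm_edges andbC.
  case: (boolP (perm_eq _ _)) => //= perm_e.
  by rewrite (route_perm_edges perm_e) route_T (balanced_perm_edges perm_e bal_T).
have all_vertices : [set v in codom T] = setT by apply/setP => v; rewrite !inE T_onto.
rewrite card_ffun_tours (card_tours_tree (size_codom T)).
- by rewrite card_ord; congr (_ * _); apply: eq_bigr => v _; rewrite indegE.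
- by rewrite card_ord.
- by rewrite all_vertices cardsT !card_ord mul2n ltn_double.
- exact: balanced_symmetric_edges.
Qed.
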